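(* Let $q$ be an exponential factor, $L=\mathrm{Levels}(q)=\{k_1>\dots>k_m\}$ and $K=\mathrm{slope}(q)$. Then there are homeomorphisms $$\mathbf B(q)\cong(\mathbb C^* )^m\times\mathbb C^N,\qquad \mathbf{SB}(q)\cong(\mathbb C^* )^m\times\mathbb C^M,$$ where $N=|\mathrm{Inc}(L)\cap(0,K]|$ and $M=|\mathrm{Inc}(L)\setminus\mathbb N|$. In particular $\dim\mathbf B(q)=|A(L)\cap(0,K]|$ and $$\dim\mathbf{SB}(q)=|A(L)\setminus\mathbb N|=\sum_{i=1}^m\big(r_ik_i-\lfloor r_{i-1}k_i\rfloor\big),$$ with $r_0=1$ and $r_i$ the lcm of the denominators of $k_1,\dots,k_i$.
   Context: Exponential factors: finite sums $q=\sum_k a_kx^k$, $a_k\in\mathbb C$, $k\in\mathbb Q_{>0}$ (i.e. elements of $\bigcup_{r\ge1}x^{1/r}\mathbb C[x^{1/r}]$). $\mathrm{slope}(q)$ = largest exponent with nonzero coefficient ($0$ if $q=0$); $\mathrm{ram}(q)$ = least $r\ge1$ with $q\in x^{1/r}\mathbb C[x^{1/r}]$. Galois operator $\sigma(\sum a_kx^k)=\sum a_ke^{-2\pi\sqrt{-1}k}x^k$; $\langle q\rangle=\{\sigma^i(q)\}$ has $\mathrm{ram}(q)$ elements. $\mathrm{Levels}(q)=\{\mathrm{slope}(q-\sigma^i(q)):i\in\mathbb Z\}\setminus\{0\}$. Admissible exponents: for $L=\{k_1>\dots>k_m\}\subset\mathbb Q_{>0}$ let $r_i$ be the lcm of the denominators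 (in lowest terms) of $k_1,\dots,k_i$, $A(L)=\mathbb N_{>0}\cup\bigcup_{i=1}^m\big((0,k_i]\cap\tfrac1{r_i}\mathbb N\big)$, and $\mathrm{Inc}(L)=A(L)\setminus L$. Configuration spaces: for a pointed irregular type $Q=[(n_1,q_1),\dots,(n_m,q_m)]$ (with $n_i\in\mathbb N_{>0}$, $q_i$ in distinct Galois orbits), let $r=\mathrm{lcm}_i\mathrm{ram}(q_i)$, $K=\max_i\mathrm{slope}(q_i)$, $s=rK$, and for $\mathbf a=(a_{i,j})\in\mathbb C^{ms}$ set $Q_{\mathbf a}=[(n_i,\sum_{j=1}^sa_{i,j}x^{j/r})]_{i=1}^m$. Then $\mathbf B(Q)=\{\mathbf a\in\mathbb C^{ms}:Q_{\mathbf a}\sim Q\}$ (subspace topology), where $Q'\sim Q$ means same multiplicities and $\mathrm{slope}(\sigma^k(q'_i)-\sigma^l(q'_j))=\mathrm{slope}(\sigma^k(q_i)-\sigma^l(q_j))$ for all $i,j$ and $0\le k\le\mathrm{ram}(q_i)$, $0\le l\le\mathrm{ram}(q_j)$. $\mathbf{SB}(Q)=\{\mathbf a\in\mathbf B(Q):\mathrm{Tr}(Q_{\mathbf a})=0\}$, where the trace is the sum $\sum_i n_i\sum_{t=0}^{\mathrm{ram}(q_i)-1}\sigma^t(q_i)$ of all entries of the associated full list. Here $\mathbf B(q):=\mathbf B([(1,q)])$, $\mathbf{SB}(q):=\mathbf{SB}([(1,q)])$. *)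

From HB Require Import structures.
From mathcomp Require Import all_boot all_order all_algebra.
From mathcomp Require Import all_classical all_reals all_analysis.
From mathcomp Require Import complex.
Set Implicit Arguments.
Unset Strict Implicit.
Unset Printing Implicit Defensive.
Import Order.TTheory GRing.Theory Num.Theory.
Import numFieldNormedType.Exports.
Local Open Scope classical_set_scope.
Local Open Scope ring_scope.

Notation Cplx R := (R[i] : numClosedFieldType).

Section ExpFactors.
Variable R : realType.
Local Notation C := (Cplx R).

(* An exponential factor  q = sum_k q(k) x^k  is encoded by its coefficient
   function  q : rat -> C  together with a finite list S of positive rationals
   containing its support. *)
Definition expfactor_on (S : seq rat) (q : rat -> C) : Prop :=
  (forall k, q k != 0 -> k \in S) /\ (forall k, k \in S -> 0 < k).

(* slope of a finite sum f whose support is contained in S: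
   largest exponent with nonzero coefficient, 0 if f = 0. *)
Definition slope_in (S : seq rat) (f : rat -> C) : rat :=
  \big[Num.max/0]_(k <- S | f k != 0) k.

(* q belongs to x^{1/r} C[x^{1/r}] *)
Definition in_ram (S : seq rat) (q : rat -> C) (r : nat) : bool :=
  (0 < r)%N && all (fun k => (q k != 0) ==> ((r%:R * k : rat) \is a Num.nat)) S.

(* ram(q) = least r >= 1 with q in x^{1/r} C[x^{1/r}] *)
Definition ram (S : seq rat) (q : rat -> C) : nat :=
  match pselect (exists r, in_ram S q r) with
  | left h => ex_minn h
  | right _ => 1%N
  end.

(* e^{-2 pi sqrt(-1) k} *)
Definition galfactor (k : rat) : C :=
  Complex (cos (2 * pi * ratr k)) (- sin (2 * pi * ratr k)).

Definition sigma_pow (i : int) (f : rat -> C) : rat -> C :=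
  fun k => galfactor k ^ i * f k.

Definition fdiff (f g : rat -> C) : rat -> C := fun k => f k - g k.

(* Levels(q) = { slope(q - sigma^i q) : i in Z } \ {0} *)
Definition is_Level (S : seq rat) (q : rat -> C) (x : rat) : Prop :=
  x != 0 /\ exists i : int, x = slope_in S (fdiff q (sigma_pow i q)).

(* configuration-space data for q: r = ram q, K = slope q, s = r K *)
Definition cK (S : seq rat) (q : rat -> C) : rat := slope_in S q.
Definition cs (S : seq rat) (q : rat -> C) : nat :=
  Num.truncn ((ram S q)%:R * cK S q).

(* the grid of exponents j/r, 1 <= j <= s *)
Definition grid (r s : nat) : seq rat := [seq (j.+1)%:R / r%:R | j <- iota 0 s].

(* q_a = sum_{j=1}^s a_j x^{j/r} *)
Definition qa (r s : nat) (a : 'rV[C]_s) : rat -> C :=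
  fun k => \sum_(j < s) (if k == (j.+1)%:R / r%:R then a 0 j else 0).

(* q_a ~ q (single component, multiplicity 1) *)
Definition equiv_q (S : seq rat) (q : rat -> C) (a : 'rV[C]_(cs S q)) : Prop :=
  let r := ram S q in let s := cs S q in
  forall k l : nat, (k <= r)%N -> (l <= r)%N ->
    slope_in (grid r s) (fdiff (sigma_pow k (qa r a)) (sigma_pow l (qa r a)))
    = slope_in S (fdiff (sigma_pow k q) (sigma_pow l q)).

Definition Bq (S : seq rat) (q : rat -> C) : set 'rV[C]_(cs S q) :=
  [set a | @equiv_q S q a].

(* Tr(q_a) = sum_{t < ram(q_a)} sigma^t(q_a) *)
Definition trace_zero (r s : nat) (a : 'rV[C]_s) : Prop :=
  forall k : rat,
    \sum_(t < ram (grid r s) (qa r a)) sigma_pow t (qa r a) k = 0.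

Definition SBq (S : seq rat) (q : rat -> C) : set 'rV[C]_(cs S q) :=
  [set a | @equiv_q S q a /\ trace_zero (ram S q) a].

(* (C^* )^m x C^n, realised as the subset of C^(m+n) whose first m
   coordinates are nonzero *)
Definition CstarC (m n : nat) : set 'rV[C]_(m + n) :=
  [set v | forall i : 'I_(m + n), (i < m)%N -> v 0 i != 0].

End ExpFactors.
Arguments equiv_q {R} S q a.
Arguments Bq {R} S q _ : assert.
Arguments SBq {R} S q _ : assert.
Arguments CstarC : clear implicits.

Definition homeomorphic {X Y : topologicalType} (A : set X) (B : set Y) : Prop :=
  exists (f : X -> Y) (g : Y -> X),
    [/\ (forall x, A x -> B (f x)), (forall y, B y -> A (g y)),
        (forall x, A x -> g (f x) = x), (forall y, B y -> f (g y) = y)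
      & ({within A, continuous f} /\ {within B, continuous g})].

Definition is_card (P : rat -> bool) (n : nat) : Prop :=
  exists s : seq rat, [/\ uniq s, (forall x, (x \in s) = P x) & size s = n].

(* r_i = lcm of the denominators of k_1, ..., k_i  (r_0 = 1) *)
Definition rden (ks : seq rat) (i : nat) : nat :=
  foldr lcmn 1%N [seq `|denq k|%N | k <- take i ks].

(* A(L), for L = ks = [k_1 > ... > k_m] *)
Definition inA (ks : seq rat) (x : rat) : bool :=
  (0 < x) && ((x \is a Num.nat) ||
    [exists i : 'I_(size ks),
       (x <= nth 0 ks i) && (((rden ks i.+1)%:R * x : rat) \is a Num.nat)]).

Definition inInc (ks : seq rat) (x : rat) : bool := inA ks x && (x \notin ks).

From HB Require Import structures.
From mathcomp Require Import all_boot all_order all_algebra.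
From mathcomp Require Import all_classical all_reals all_analysis.
From mathcomp Require Import complex.
From mathcomp Require Import ring lra.
Set Implicit Arguments.
Unset Strict Implicit.
Unset Printing Implicit Defensive.
Import Order.TTheory GRing.Theory Num.Theory.
Import numFieldNormedType.Exports.
Local Open Scope classical_set_scope.
Local Open Scope ring_scope.

(* Write g_y = e^{-2 pi i y}.  The coefficient of y in sigma^k f - sigma^l f
   is (g_y^k - g_y^l) f(y), which vanishes iff f(y) = 0 or (k - l) y is an
   integer.  Hence slope(sigma^k f - sigma^l f) only depends on k - l and on
   the support of f: it is the largest y in supp f with (k - l) y not in Z.
   From this we show that q_a ~ q holds iff  L <= supp(q_a) <= A(L), where
   L = Levels(q), and that Tr(q_a) = 0 iff the integral coefficients of q_a
   vanish.  So B(q) and SB(q) are "coordinate sets" of C^s: the coordinates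
   indexed by L are nonzero, those outside A(L) (resp. outside A(L) \ N)
   vanish, the others are free; such a set is homeomorphic to
   (C^* )^m x C^n by a permutation of coordinates.  The cardinalities are
   obtained by identifying coordinates with the grid exponents j/r, and the
   dimension formula by splitting A(L) \ N into the layers
   D_i = (0, k_i] /\ (1/r_i) Z \ (1/r_{i-1}) Z, of size r_i k_i - floor(r_{i-1} k_i). *)

Section RootsOfUnity.
Variable R : realType.
Local Notation C := (Cplx R).

Definition expmi (t : R) : C := Complex (cos t) (- sin t).

Lemma expmiD a b : expmi a * expmi b = expmi (a + b).
Proof. by rewrite /expmi /GRing.mul /=; congr Complex; rewrite ?cosD ?sinD; ring. Qed.

Lemma expmi0 : expmi 0 = 1.
Proof. by rewrite /expmi cos0 sin0 oppr0. Qed.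

Lemma expmi_neq0 a : expmi a != 0.
Proof.
apply/negP=> /eqP h; have := expmiD a (- a).
by rewrite h mul0r subrr expmi0 => /eqP; rewrite eq_sym oner_eq0.
Qed.

Lemma expmiV a : (expmi a)^-1 = expmi (- a).
Proof. by apply: (mulfI (expmi_neq0 a)); rewrite mulfV ?expmi_neq0 // expmiD subrr expmi0. Qed.

Lemma expmiXn a (n : nat) : expmi a ^+ n = expmi (n%:R * a).
Proof.
elim: n => [|n IH]; first by rewrite expr0 mul0r expmi0.
by rewrite exprS IH expmiD -nat1r mulrDl mul1r.
Qed.

Lemma expmiXz a (n : int) : expmi a ^ n = expmi (n%:~R * a).
Proof.
case: n => n; first by rewrite -exprnP expmiXn.
by rewrite NegzE -invr_expz -exprnP expmiXn expmiV intrN mulNr.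
Qed.

Lemma expmi_2pi : expmi (2 * pi) = 1.
Proof. by rewrite /expmi mulr_natl cos2pi sin2pi oppr0. Qed.

Lemma cos2pi_eq1 (x : R) : 0 <= x < 1 -> cos (2 * pi * x) = 1 -> x = 0.
Proof.
move=> /andP[x0 x1] hc; have pi0 := pi_gt0 R.
have h0 : 0 <= 2 * pi * x by rewrite mulr_ge0 // mulr_ge0 // pi_ge0.
have [hle|hlt] := leP (2 * pi * x) pi.
  have := @cos_inj R (2 * pi * x) 0.
  rewrite !in_itv /= h0 hle lexx pi_ge0 hc cos0 => /(_ isT isT erefl) /eqP.
  by rewrite !mulf_eq0 pnatr_eq0 (gt_eqF pi0) /= => /eqP.
have hu : cos (2 * pi - 2 * pi * x) = 1.
  have c2 : cos (2 * pi) = 1 :> R by rewrite mulr_natl cos2pi.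
  have s2 : sin (2 * pi) = 0 :> R by rewrite mulr_natl sin2pi.
  by rewrite cosB c2 s2 hc mul0r addr0 mulr1.
have h1 : 0 <= 2 * pi - 2 * pi * x by nra.
have h2 : 2 * pi - 2 * pi * x <= pi by nra.
have := @cos_inj R (2 * pi - 2 * pi * x) 0.
rewrite !in_itv /= h1 h2 lexx pi_ge0 hu cos0 => /(_ isT isT erefl) h.
nra.
Qed.

Lemma expmi_eq1 (x : R) : (expmi (2 * pi * x) == 1) = (x \is a Num.int).
Proof.
apply/idP/idP; last first.
  by move=> /intrP[n ->]; rewrite mulrC -expmiXz expmi_2pi exp1rz.
move=> /eqP hE; pose n := Num.floor x.
have hx : 0 <= x - n%:~R < 1.
  have := floor_itv x; rewrite -/n intrD => /andP[h1 h2].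
  by apply/andP; split; [rewrite subr_ge0 | rewrite ltrBlDl].
have hc : cos (2 * pi * (x - n%:~R)) = 1.
  have : expmi (2 * pi * (x - n%:~R)) = 1.
    by rewrite mulrBr -expmiD hE mul1r -mulrN mulrC -intrN -expmiXz expmi_2pi exp1rz.
  by move=> /eqP; rewrite eq_complex /= => /andP[/eqP -> _].
have := cos2pi_eq1 hx hc => /eqP; rewrite subr_eq0 => /eqP ->.
exact: rpred_int.
Qed.

End RootsOfUnity.

Lemma ratr_intE (R : realType) (y : rat) :
  (ratr y \is a @Num.int R) = (y \is a Num.int).
Proof. by rewrite !intrEfloor floor_rat -ratr_int (inj_eq (fmorph_inj _)). Qed.

Lemma galfactor_expz (R : realType) (k : rat) (i : int) :
  @galfactor R k ^ i = expmi (2 * pi * ratr (i%:~R * k)).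
Proof. by rewrite /galfactor -/(expmi _) expmiXz rmorphM /= ratr_int mulrCA. Qed.

Lemma galfactor_expz_eq (R : realType) (k : rat) (i j : int) :
  (@galfactor R k ^ i == @galfactor R k ^ j) = ((i - j)%:~R * k \is a Num.int).
Proof.
have g0 : @galfactor R k != 0 by exact: expmi_neq0.
rewrite -[in LHS](subrK j i) expfzDr // -[X in _ == X]mul1r (inj_eq (mulIf _)).
  by rewrite galfactor_expz expmi_eq1 ratr_intE.
by rewrite expfz_eq0 negb_and g0 orbT.
Qed.

(* v is the maximum of the finite predicate P together with 0, i.e. v is the
   slope of a sum whose support is P *)
Definition max0_spec (P : rat -> bool) (v : rat) : Prop :=
  [/\ 0 <= v, v = 0 \/ P v & forall y, P y -> y <= v].

Lemma max0_spec_uniq P v w : max0_spec P v -> max0_spec P w -> v = w.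
Proof.
move=> [v0 vP vm] [w0 wP wm]; apply/eqP; rewrite eq_le; apply/andP; split.
  by case: vP => [->|/wm].
by case: wP => [->|/vm].
Qed.

Lemma max0_spec_ext P Q v : P =1 Q -> max0_spec P v -> max0_spec Q v.
Proof.
move=> e [h1 h2 h3]; split => // [|y]; last by rewrite -e; apply: h3.
by case: h2 => [->|h]; [left|right; rewrite -e].
Qed.

Section Slope.
Variable R : realType.
Implicit Types (T : seq rat) (f : rat -> Cplx R).

Lemma slope_in_spec T f : max0_spec (fun y => (y \in T) && (f y != 0)) (slope_in T f).
Proof.
rewrite /slope_in; elim: T => [|a T [IH0 IH1 IH2]]; first by rewrite big_nil; split => //; left.
rewrite big_cons; set B := \big[_/_]_(_ <- _ | _) _ in IH0 IH1 IH2 *.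
have IH1' : B = 0 \/ (B \in a :: T) && (f B != 0).
  by case: IH1 => [->|/andP[i1 i2]]; [left|right; rewrite inE i1 i2 orbT].
have IH2' y : (y \in a :: T) && (f y != 0) -> y != a -> y <= B.
  rewrite inE => /andP[/orP[/eqP->|yT fy]]; first by rewrite eqxx.
  by move=> _; apply: IH2; rewrite yT fy.
case: ifP => fa; last first.
  split=> // y hy; apply: IH2' (hy) _.
  by apply: contraTneq hy => ->; rewrite fa andbF.
have faP : (a \in a :: T) && (f a != 0) by rewrite inE eqxx fa.
split.
- by rewrite le_max IH0 orbT.
- by case: (leP a B) => _; [exact: IH1'|right].
- move=> y hy; rewrite le_max; case: (eqVneq y a) => [->|ya]; first by rewrite lexx.
  by rewrite IH2' ?orbT.
Qed.

Lemma slope_ext T f g : f =1 g -> slope_in T f = slope_in T g.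
Proof. by move=> e; rewrite /slope_in; apply: eq_bigl => k; rewrite e. Qed.

Lemma sigma_pow0 f : sigma_pow 0 f =1 f.
Proof. by move=> y; rewrite /sigma_pow expr0z mul1r. Qed.

(* the support of sigma^k f - sigma^l f: where f y != 0 and (k - l) y is
   not an integer *)
Definition nonint_supp (P : rat -> bool) (d : int) (y : rat) : bool :=
  P y && ~~ (d%:~R * y \is a Num.int).

Lemma fdiff_sigma_neq0 f (k l : int) y :
  (fdiff (sigma_pow k f) (sigma_pow l f) y != 0) = nonint_supp (fun y => f y != 0) (k - l) y.
Proof.
by rewrite /fdiff /sigma_pow /nonint_supp -mulrBl mulf_eq0 negb_or subr_eq0 galfactor_expz_eq andbC.
Qed.

Lemma slope_sigma_spec T f (k l : int) : (forall y, f y != 0 -> y \in T) ->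
  max0_spec (nonint_supp (fun y => f y != 0) (k - l))
            (slope_in T (fdiff (sigma_pow k f) (sigma_pow l f))).
Proof.
move=> hT; apply: max0_spec_ext (slope_in_spec T _) => y.
rewrite fdiff_sigma_neq0; apply/andP/idP => [[]//|h]; split => //.
by apply: hT; case/andP: h.
Qed.

Lemma slope_sigma_shift T f (k l : int) : (forall y, f y != 0 -> y \in T) ->
  slope_in T (fdiff (sigma_pow k f) (sigma_pow l f)) =
  slope_in T (fdiff (sigma_pow (k - l) f) (sigma_pow 0 f)).
Proof.
move=> hT; apply: max0_spec_uniq (slope_sigma_spec k l hT) _.
by apply: max0_spec_ext (slope_sigma_spec (k - l) 0 hT) => y; rewrite subr0.
Qed.

End Slope.

Lemma mulr_int_den (d : int) (k : rat) :
  (d%:~R * k \is a Num.int) = (`|denq k| %| `|d|)%N.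
Proof.
have e0 := denq_neq0 k; apply/idP/idP; last first.
  move=> hd; have /dvdzP[q ->] : (denq k %| d)%Z by [].
  by rewrite intrM -mulrA [_ * k]mulrC -numqE -intrM rpred_int.
move=> /intrP[z hz]; have h : d * numq k = z * denq k.
  by apply/eqP; rewrite -(eqr_int rat) !intrM numqE mulrA hz.
have : (denq k %| d * numq k)%Z by rewrite h dvdz_mull ?dvdzz.
by rewrite Gauss_dvdzl // coprimezE coprime_sym coprime_num_den.
Qed.

Lemma mulr_int_dvd (c : nat) (d : int) (y : rat) :
  c%:R * y \is a Num.int -> (c %| `|d|)%N -> d%:~R * y \is a Num.int.
Proof.
move=> hc hd; have /dvdzP[q ->] : (c%:Z %| d)%Z by [].
by rewrite intrM -mulrA rpredM ?rpred_int.
Qed.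

Lemma mulr_nat_dvd (c c' : nat) (x : rat) : (c %| c')%N ->
  c%:R * x \is a Num.nat -> c'%:R * x \is a Num.nat.
Proof. by move=> /dvdnP[e ->] h; rewrite natrM -mulrA rpredM ?natr_nat. Qed.

Section Denominators.
Variable ks : seq rat.

Lemma rden_dvd i n :
  (rden ks i %| n)%N = all (fun k => `|denq k| %| n)%N (take i ks).
Proof.
rewrite /rden; elim: (take i ks) => [|k s IH] /=; first by rewrite dvd1n.
by rewrite dvdn_lcm IH.
Qed.

Lemma rden_gt0 i : (0 < rden ks i)%N.
Proof.
rewrite /rden; elim: (take i ks) => [|k s IH] //=.
by rewrite lcmn_gt0 IH andbT absz_gt0 denq_neq0.
Qed.

Lemma rden0 : rden ks 0 = 1%N.
Proof. by rewrite /rden take0. Qed.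

Lemma rden_mono i j : (i <= j)%N -> (rden ks i %| rden ks j)%N.
Proof.
move=> ij; have := dvdnn (rden ks j); rewrite !rden_dvd -(take_takel _ ij).
by rewrite -{1}(cat_take_drop i (take j ks)) all_cat => /andP[].
Qed.

Lemma rden_int i t : (t < i)%N -> (t < size ks)%N ->
  (rden ks i)%:R * nth 0 ks t \is a Num.int.
Proof.
move=> ti ts; have := dvdnn (rden ks i); rewrite rden_dvd => /(all_nthP 0) /(_ t).
rewrite size_take_min nth_take // leq_min ti ts => /(_ isT) h.
by rewrite -[_%:R]/((Posz (rden ks i))%:~R) mulr_int_den.
Qed.

Lemma rden_div i (d : int) : (i <= size ks)%N ->
  (forall t, (t < i)%N -> d%:~R * nth 0 ks t \is a Num.int) -> (rden ks i %| `|d|)%N.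
Proof.
move=> hi h; rewrite rden_dvd; apply/(all_nthP 0) => t.
rewrite size_take_min leq_min => /andP[ti _].
by rewrite nth_take // -mulr_int_den h.
Qed.

Hypothesis ks_sorted : sorted (fun x y => y < x) ks.

Lemma sorted_nth_ge t u : (t <= u)%N -> (u < size ks)%N -> nth 0 ks u <= nth 0 ks t.
Proof.
move=> tu us; have hs : sorted (fun x y : rat => y <= x) ks.
  by apply: sub_sorted ks_sorted => x y /ltW.
have tr : transitive (fun x y : rat => y <= x).
  by move=> y x z h1 h2; exact: le_trans h2 h1.
have ts : (t < size ks)%N := leq_ltn_trans tu us.
by apply: (sorted_leq_nth tr (fun x => lexx x) 0 hs) tu; rewrite inE.
Qed.

Lemma sorted_uniq_levels : uniq ks.
Proof.
apply: sorted_uniq ks_sorted; last by move=> x; rewrite /= ltxx.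
by move=> y x z h1 h2; exact: lt_trans h2 h1.
Qed.

Lemma sorted_find_le y t : (t < size ks)%N ->
  (y <= nth 0 ks t) = (t < find (fun k : rat => (k < y)%R) ks)%N.
Proof.
move=> ts; apply/idP/idP; last by move=> /(before_find 0) /negbT; rewrite -leNgt.
move=> h; rewrite ltnNge; apply/negP => it.
have iS : (find (fun k : rat => (k < y)%R) ks < size ks)%N := leq_ltn_trans it ts.
have := nth_find 0 (a := fun k : rat => k < y) (s := ks); rewrite has_find => /(_ iS) hi.
by have := le_lt_trans (le_trans h (sorted_nth_ge it ts)) hi; rewrite ltxx.
Qed.

Lemma inA_find y : 0 < y -> ~~ (y \is a Num.nat) ->
  (rden ks (find (fun k : rat => k < y) ks))%:R * y \is a Num.int -> inA ks y.
Proof.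
move=> y0 yn; set i := find _ ks => hD; rewrite /inA y0 (negbTE yn) /=.
case: (posnP i) => [i0|ipos].
  by move: hD yn; rewrite i0 rden0 mul1r natrEint => ->; rewrite ltW.
have jS : (i.-1 < size ks)%N by rewrite prednK // find_size.
apply/existsP; exists (Ordinal jS) => /=.
by rewrite sorted_find_le // prednK // leqnn natrEint hD mulr_ge0 ?ler0n ?ltW.
Qed.

End Denominators.

(* Here fq, fa are the
   supports of q and q_a, Lq d and La d the slopes of sigma^d q - q and
   sigma^d q_a - q_a, r = ram(q), and ks lists Levels(q) = {Lq d} \ {0}. *)
Section Equivalence.
Variables (ks : seq rat) (r : nat) (fq fa : rat -> bool) (Lq La : int -> rat).
Hypothesis ks_sorted : sorted (fun x y => y < x) ks.
Hypothesis Lq_spec : forall d, max0_spec (nonint_supp fq d) (Lq d).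
Hypothesis La_spec : forall d, max0_spec (nonint_supp fa d) (La d).
Hypothesis ks_levels : forall x, x \in ks <-> (x != 0 /\ exists d, x = Lq d).
Hypothesis r_gt0 : (0 < r)%N.
Hypothesis r_fq : forall y, fq y -> r%:R * y \is a Num.int.
Hypothesis fa_pos : forall y, fa y -> 0 < y.

Lemma level_witness x : x \in ks -> exists d, x = Lq d /\ nonint_supp fq d x.
Proof.
move=> /ks_levels [x0 [d xd]]; exists d; split => //.
have [_ [h|h] _] := Lq_spec d; last by rewrite xd.
by move: x0; rewrite xd h eqxx.
Qed.

Lemma level_supp x : x \in ks -> fq x.
Proof. by move=> /level_witness [d [_ /andP[]]]. Qed.

Lemma level_pos x : x \in ks -> 0 < x.
Proof.
by move=> /ks_levels [x0 [d xd]]; have [h _ _] := Lq_spec d; rewrite lt_def x0 xd h.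
Qed.

Lemma Lq_level d : Lq d != 0 -> Lq d \in ks.
Proof. by move=> h; apply/ks_levels; split => //; exists d. Qed.

(* every y in A(L) with d y not integral is bounded by the slope Lq d:
   if y <= k_i and r_i y is integral, d cannot make all of k_1, ..., k_i
   integral, and such a k_t >= y lies in the support of sigma^d q - q *)
Lemma level_bound d y : inA ks y -> ~~ (d%:~R * y \is a Num.int) -> y <= Lq d.
Proof.
move=> /andP[y0 /orP[yn|/existsP[i /andP[yi hi]]]] hd.
  by rewrite rpredM ?rpred_int ?(intr_nat yn) in hd.
have [t ti ht] : exists2 t, (t < i.+1)%N & ~~ (d%:~R * nth 0 ks t \is a Num.int).
  case: (boolP [exists t : 'I_i.+1, ~~ (d%:~R * nth 0 ks t \is a Num.int)]).
    by move=> /existsP[t ht]; exists t.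
  rewrite negb_exists => /forallP hn; move: hd; rewrite (mulr_int_dvd (intr_nat hi)) //.
  by apply: rden_div (ltn_ord i) _ => t ti; have := hn (Ordinal ti); rewrite negbK.
have ts : (t < size ks)%N := leq_ltn_trans (ti : (t <= i)%N) (ltn_ord i).
have [_ _ Lq_max] := Lq_spec d.
apply: le_trans yi (le_trans (sorted_nth_ge ks_sorted (ti : (t <= i)%N) (ltn_ord i)) _).
by apply: Lq_max; rewrite /nonint_supp level_supp ?mem_nth.
Qed.

(* since r y is integral on the support of q, Lq d only depends on d mod r *)
Lemma Lq_modr d : Lq (d %% r%:Z)%Z = Lq d.
Proof.
apply: (@max0_spec_uniq (nonint_supp fq d)); last exact: Lq_spec.
apply: max0_spec_ext (Lq_spec _) => y; rewrite /nonint_supp; case fy: (fq y) => //=.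
rewrite /modz intrD intrN mulrDl mulNr intrM -mulrA rpredBr //.
by rewrite rpredM ?rpred_int ?r_fq.
Qed.

Section SlopesAgree.
Hypothesis La_Lq : forall k : nat, (k <= r)%N -> La k = Lq k.

(* a level y = Lq d is also the slope La (d mod r), hence lies in supp(q_a) *)
Lemma levels_in_supp y : y \in ks -> fa y.
Proof.
move=> yk; have [d [yd _]] := level_witness yk.
have y0 : y != 0 by rewrite gt_eqF ?level_pos.
have dr0 : (0 <= d %% r%:Z)%Z by rewrite modz_ge0 // eqz_nat -lt0n.
have hk : (`|(d %% r%:Z)%Z| <= r)%N.
  by apply: ltnW; rewrite -ltz_nat gez0_abs // ltz_pmod // ltz_nat.
have := La_Lq hk; rewrite gez0_abs // Lq_modr -yd => hLa.
have [_ [h|/andP[h _]] _] := La_spec (d %% r%:Z)%Z; last by rewrite -hLa.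
by move: y0; rewrite -hLa h eqxx.
Qed.

(* if y in supp(q_a) were not in A(L), then with rho = r_i for the levels
   k_1, ..., k_i >= y we would get y <= La rho = Lq rho, a level >= y that
   rho makes integral, which is absurd *)
Lemma supp_in_A y : fa y -> inA ks y.
Proof.
move=> fy; have y0 := fa_pos fy.
case yn: (y \is a Num.nat); first by rewrite /inA y0 yn.
apply: (inA_find ks_sorted y0 (negbT yn)).
set i := find _ ks; set rho := rden ks i; apply/negPn/negP => hD.
have rho_r : (rho <= r)%N.
  apply: dvdn_leq r_gt0 (rden_div (d := r%:Z) (find_size _ _) _) => t ti.
  by apply/r_fq/level_supp/mem_nth; exact: leq_trans ti (find_size _ _).
have [_ _ La_max] := La_spec rho.
have yL : y <= Lq rho by rewrite -La_Lq // La_max // /nonint_supp fy hD.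
have L0 : Lq rho != 0 by rewrite gt_eqF // (lt_le_trans y0 yL).
have [_ [h|/andP[_ hL]] _] := Lq_spec rho; first by rewrite h eqxx in L0.
have Lk := Lq_level L0; have ts : (index (Lq rho) ks < size ks)%N by rewrite index_mem.
have ti : (index (Lq rho) ks < i)%N by rewrite -sorted_find_le // nth_index.
by have := rden_int ti ts; rewrite nth_index // (negbTE hL).
Qed.

End SlopesAgree.

Lemma slopes_agree d :
  (forall y, y \in ks -> fa y) -> (forall y, fa y -> inA ks y) -> La d = Lq d.
Proof.
move=> ks_fa fa_A; apply: (max0_spec_uniq (La_spec _)).
have [L0 LP Lq_max] := Lq_spec d; split => //.
  case: (eqVneq (Lq d) 0) => [->|Lne]; [by left | right].
  case: LP => [h|/andP[_ h2]]; first by rewrite h eqxx in Lne.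
  by rewrite /nonint_supp h2 andbT ks_fa // Lq_level.
by move=> y /andP[fy hy]; apply: level_bound (fa_A y fy) hy.
Qed.

Lemma equiv_supp :
  (forall k l : nat, (k <= r)%N -> (l <= r)%N -> La (k%:Z - l%:Z) = Lq (k%:Z - l%:Z)) <->
  ((forall y, y \in ks -> fa y) /\ (forall y, fa y -> inA ks y)).
Proof.
split => [H|[ks_fa fa_A] k l _ _]; last exact: slopes_agree.
have La_Lq k : (k <= r)%N -> La k = Lq k by move=> hk; have := H k 0%N hk (leq0n r); rewrite subr0.
by split; [exact: levels_in_supp | exact: supp_in_A].
Qed.

End Equivalence.

Lemma size_eq_mem (T : eqType) (s1 s2 : seq T) :
  uniq s1 -> uniq s2 -> s1 =i s2 -> size s1 = size s2.
Proof. by move=> u1 u2 e; apply/perm_size/uniq_perm. Qed.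

Lemma is_card_uniq P a b : is_card P a -> is_card P b -> a = b.
Proof. by move=> [s1 [u1 m1 <-]] [s2 [u2 m2 <-]]; apply: size_eq_mem => // x; rewrite m1 m2. Qed.

Lemma is_card_addks (ks : seq rat) (Q P : rat -> bool) n :
  uniq ks -> (forall k, k \in ks -> Q k) ->
  (forall x, P x = Q x && (x \notin ks)) -> is_card P n -> is_card Q (size ks + n).
Proof.
move=> uk hQ hP [s [us ms <-]]; exists (ks ++ s); split; last by rewrite size_cat.
  rewrite cat_uniq uk us andbT /=; apply/hasPn => x; rewrite ms hP.
  by case/andP.
move=> x; rewrite mem_cat ms hP; case xk: (x \in ks) => /=; first by rewrite hQ.
by rewrite andbT.
Qed.

Definition fracs (c : nat) (k : rat) : seq rat :=
  [seq (n.+1)%:R / c%:R | n <- iota 0 (Num.truncn (c%:R * k))].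

Lemma fracs_uniq c k : (0 < c)%N -> uniq (fracs c k).
Proof.
move=> c0; rewrite map_inj_uniq ?iota_uniq // => n m.
have ci : (c%:R : rat)^-1 != 0 by rewrite invr_eq0 pnatr_eq0 -lt0n.
by move=> /(mulIf ci) /eqP; rewrite eqr_nat => /eqP [].
Qed.

Lemma size_fracs c k : size (fracs c k) = Num.truncn (c%:R * k).
Proof. by rewrite size_map size_iota. Qed.

Lemma mem_fracs c k x : (0 < c)%N -> 0 <= k ->
  (x \in fracs c k) = [&& 0 < x, x <= k & c%:R * x \is a Num.nat].
Proof.
move=> c0 k0; have cr : (0 < c%:R :> rat) by rewrite ltr0n.
apply/mapP/idP.
  move=> [n]; rewrite mem_iota add0n /= => hn ->.
  have e : c%:R * (n.+1%:R / c%:R) = n.+1%:R :> rat by rewrite mulrC divfK ?gt_eqF.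
  rewrite divr_gt0 ?ltr0n // e natr_nat andbT -(ler_pM2l cr) e.
  by move: hn; rewrite truncn_gt_nat.
move=> /and3P[x0 xk /natrP[m hm]].
have m0 : (0 < m)%N by rewrite -(ltr0n rat) -hm mulr_gt0.
exists m.-1; last by rewrite prednK // -hm mulrAC divff ?mul1r ?gt_eqF.
by rewrite mem_iota add0n /= truncn_gt_nat prednK // -hm ler_pM2l.
Qed.

(* A(L) \ N is the disjoint union of the layers
   D_i = ((0, k_i] /\ (1/r_{i+1}) Z) \ (1/r_i) Z,  of size r_{i+1} k_i - floor (r_i k_i) *)
Section Layers.
Variable ks : seq rat.
Hypothesis ks_sorted : sorted (fun x y => y < x) ks.
Hypothesis ks_pos : forall k, k \in ks -> 0 < k.

Lemma nth_ge0 i : 0 <= nth 0 ks i.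
Proof.
case: (ltnP i (size ks)) => hi; last by rewrite nth_default.
exact/ltW/ks_pos/mem_nth.
Qed.

Definition layer (i : nat) : seq rat :=
  [seq x <- fracs (rden ks i.+1) (nth 0 ks i) | ~~ ((rden ks i)%:R * x \is a Num.nat)].

Lemma mem_layer i x : (x \in layer i) = ~~ ((rden ks i)%:R * x \is a Num.nat) &&
   [&& 0 < x, x <= nth 0 ks i & (rden ks i.+1)%:R * x \is a Num.nat].
Proof. by rewrite mem_filter mem_fracs ?rden_gt0 ?nth_ge0. Qed.

Lemma layer_uniq i : uniq (layer i).
Proof. by rewrite filter_uniq // fracs_uniq ?rden_gt0. Qed.

Lemma size_layer i : size (layer i) =
  (Num.truncn ((rden ks i.+1)%:R * nth 0 ks i)%R - Num.truncn ((rden ks i)%:R * nth 0 ks i)%R)%N.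
Proof.
set p := (fun x : rat => (rden ks i)%:R * x \is a Num.nat).
have e : count p (fracs (rden ks i.+1) (nth 0 ks i)) = Num.truncn ((rden ks i)%:R * nth 0 ks i).
  rewrite -size_filter -size_fracs; apply: size_eq_mem.
  - by rewrite filter_uniq // fracs_uniq ?rden_gt0.
  - by rewrite fracs_uniq ?rden_gt0.
  move=> x; rewrite mem_filter !mem_fracs ?rden_gt0 ?nth_ge0 // /p.
  case h: ((rden ks i)%:R * x \is a Num.nat) => /=; last by rewrite !andbF.
  by rewrite (mulr_nat_dvd (@rden_mono ks _ _ (leqnSn i)) h) !andbT.
by rewrite size_filter -size_fracs -(count_predC p) e addKn.
Qed.

Definition in_A_below (j : nat) (x : rat) : bool :=
  has (fun i => (x <= nth 0 ks i) && ((rden ks i.+1)%:R * x \is a Num.nat)) (iota 0 j).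

Definition layers (j : nat) : seq rat := flatten [seq layer i | i <- iota 0 j].

Lemma iota0S j : iota 0 j.+1 = iota 0 j ++ [:: j].
Proof. by rewrite -addn1 iotaD. Qed.

Lemma layersS j : layers j.+1 = layers j ++ layer j.
Proof. by rewrite /layers iota0S map_cat flatten_cat /= cats0. Qed.

Lemma mem_layers j x : (j <= size ks)%N ->
  (x \in layers j) = [&& 0 < x, ~~ (x \is a Num.nat) & in_A_below j x].
Proof.
elim: j => [|j IH] hj; first by rewrite /layers /in_A_below /= !andbF.
rewrite layersS mem_cat IH ?(ltnW hj) // mem_layer /in_A_below iota0S has_cat /= orbF.
apply/idP/idP.
  case/orP => [/and3P[-> -> ->]//|/andP[hn /and3P[x0 xk hx]]].
  rewrite x0 xk hx /= orbT andbT; apply: contra hn => xn.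
  by rewrite rpredM ?natr_nat.
move=> /and3P[x0 xn /orP[h|/andP[xk hx]]]; first by rewrite x0 xn h.
case hr: ((rden ks j)%:R * x \is a Num.nat); last by rewrite /= x0 xk hx orbT.
case: j IH hj xk hx hr => [|j] IH hj xk hx hr.
  by move: hr; rewrite rden0 mul1r => hr; rewrite hr in xn.
apply/orP; left; rewrite x0 xn !andTb; apply/hasP; exists j; first by rewrite mem_iota ltnSn.
by rewrite hr andbT (le_trans xk) // sorted_nth_ge.
Qed.

Lemma layers_uniq j : (j <= size ks)%N -> uniq (layers j).
Proof.
elim: j => [|j IH] hj //; rewrite layersS cat_uniq IH ?(ltnW hj) // layer_uniq andbT /=.
apply/hasPn => x; rewrite mem_layer mem_layers ?(ltnW hj) // => /andP[hn _].
apply/negP => /and3P[_ _ /hasP[i0]]; rewrite mem_iota add0n /= => ij /andP[_ hi].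
by move: hn; rewrite (mulr_nat_dvd (@rden_mono ks _ _ ij) hi).
Qed.

Lemma size_layers j : size (layers j) = (\sum_(i < j) size (layer i))%N.
Proof.
elim: j => [|j IH]; first by rewrite big_ord0.
by rewrite layersS size_cat IH big_ord_recr.
Qed.

Lemma has_iota0 n (P : pred nat) : has P (iota 0 n) = [exists i : 'I_n, P i].
Proof.
apply/hasP/existsP => [[i0]|[i0 hi]]; last by exists (nat_of_ord i0); rewrite // mem_iota ltn_ord.
by rewrite mem_iota add0n /= => hi h; exists (Ordinal hi).
Qed.

Lemma card_A_nonnat :
  is_card (fun x => inA ks x && ~~ (x \is a Num.nat)) (size (layers (size ks))).
Proof.
exists (layers (size ks)); split => //; first exact: layers_uniq.
move=> x; rewrite mem_layers // /inA /in_A_below.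
rewrite has_iota0; by case: (x \is a Num.nat); rewrite ?andbF ?andbT.
Qed.

Lemma card_layers_formula :
  ((size (layers (size ks)))%:R : rat) =
  \sum_(i < size ks) ((rden ks i.+1)%:R * nth 0 ks i
                    - (Num.floor ((rden ks i)%:R * nth 0 ks i))%:~R).
Proof.
rewrite size_layers natr_sum; apply: eq_bigr => i _; rewrite size_layer.
have k0 := nth_ge0 i.
have h1 : (rden ks i)%:R * nth 0 ks i <= (rden ks i.+1)%:R * nth 0 ks i.
  by rewrite ler_wpM2r // ler_nat dvdn_leq ?rden_gt0 ?rden_mono.
have hn : (rden ks i.+1)%:R * nth 0 ks i \is a Num.nat.
  by rewrite natrEint rden_int ?mulr_ge0 ?ler0n.
rewrite natrB ?le_truncn //; move: hn; rewrite natrEtruncn => /eqP ->; congr (_ - _).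
have hz : 0 <= Num.floor ((rden ks i)%:R * nth 0 ks i) by rewrite floor_ge0 mulr_ge0 ?ler0n.
by rewrite truncn_floor mulr_ge0 ?ler0n // -[in RHS](gez0_abs hz).
Qed.

End Layers.

Section CoordinateSets.
Variable R : realType.
Local Notation C := (Cplx R).

Definition select_coords (s t : nat) (psi : 'I_t -> option 'I_s) (v : 'rV[C]_s) : 'rV[C]_t :=
  \row_i (if psi i is Some k then v 0 k else 0).

Lemma select_coords_cont s t (psi : 'I_t -> option 'I_s) : continuous (select_coords psi).
Proof.
move=> u A /(@nbhs_ballP C ('rV[C]_t)) [e /= e0 eA].
apply/(@nbhs_ballP C ('rV[C]_s)); exists e => //= v [_ uv]; apply: eA; split => // i j.
by rewrite !mxE; case: (psi j) => [k|]; [exact: uv | exact: ballxx].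
Qed.

Variables (s : nat) (nz zr : pred 'I_s).
Hypothesis nz_zr : forall j, nz j -> ~~ zr j.

Definition free_coord : pred 'I_s := [pred j | ~~ nz j && ~~ zr j].

Definition coord_set : set 'rV[C]_s :=
  [set a | (forall j, nz j -> a 0 j != 0) /\ (forall j, zr j -> a 0 j = 0)].

Definition coord_enum (i : 'I_(#|nz| + #|free_coord|)) : 'I_s :=
  match fintype.split i with inl i1 => enum_val i1 | inr i2 => enum_val i2 end.

Definition coord_index (j : 'I_s) : option 'I_(#|nz| + #|free_coord|) :=
  [pick i | coord_enum i == j].

Lemma enum_nz (i : 'I_#|nz|) : nz (enum_val i).
Proof. exact: enum_valP i. Qed.

Lemma enum_free (i : 'I_#|free_coord|) : ~~ nz (enum_val i) && ~~ zr (enum_val i).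
Proof. exact: enum_valP i. Qed.

Lemma coord_enum_nz i : nz (coord_enum i) = (i < #|nz|)%N.
Proof.
rewrite /coord_enum; case: splitP => [i1 _|i2 _]; first exact: enum_nz.
by have /andP[/negbTE] := enum_free i2.
Qed.

Lemma coord_enum_zr i : ~~ zr (coord_enum i).
Proof.
rewrite /coord_enum; case: splitP => [i1 _|i2 _]; first exact/nz_zr/enum_nz.
by have /andP[] := enum_free i2.
Qed.

Lemma coord_enum_inj : injective coord_enum.
Proof.
move=> i j; rewrite /coord_enum -{2}(splitK i) -{2}(splitK j).
case: (fintype.split i) => [i1|i2]; case: (fintype.split j) => [j1|j2] e.
- by rewrite (enum_val_inj e).
- by move: (enum_nz i1) (enum_free j2); rewrite e => ->.
- by move: (enum_free i2) (enum_nz j1); rewrite e => /andP[/negbTE ->].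
- by rewrite (enum_val_inj e).
Qed.

Lemma coord_enum_onto j : ~~ zr j -> exists i, coord_enum i = j.
Proof.
move=> hz; case hn: (nz j).
  have hj : j \in nz by [].
  exists (lshift #|free_coord| (enum_rank_in hj j)).
  by rewrite /coord_enum (unsplitK (inl _)) enum_rankK_in.
have hj : j \in free_coord by rewrite inE hn hz.
exists (rshift #|nz| (enum_rank_in hj j)).
by rewrite /coord_enum (unsplitK (inr _)) enum_rankK_in.
Qed.

Lemma coord_index_enum i : coord_index (coord_enum i) = Some i.
Proof.
rewrite /coord_index; case: pickP => [k /eqP/coord_enum_inj -> //|h].
by have := h i; rewrite eqxx.
Qed.

Lemma coord_index_zr j : coord_index j = None -> zr j.
Proof.
rewrite /coord_index; case: pickP => // h _; apply: contraT => /coord_enum_onto [i ei].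
by have := h i; rewrite ei eqxx.
Qed.

(* forgetting the vanishing coordinates identifies a coordinate set with
   (C^* )^|nz| x C^|free| *)
Lemma coord_set_homeo : homeomorphic coord_set (CstarC R #|nz| #|free_coord|).
Proof.
exists (select_coords (fun i => Some (coord_enum i))), (select_coords coord_index); split.
- by move=> a [ha _] i hi; rewrite mxE ha // coord_enum_nz.
- move=> v hv; split => j hj; rewrite mxE; case ej: (coord_index j) => [i|].
  + move: ej; rewrite /coord_index; case: pickP => // i' /eqP ei [<-].
    by apply: hv; rewrite -coord_enum_nz ei.
  + by move: (nz_zr hj); rewrite (coord_index_zr ej).
  + move: ej; rewrite /coord_index; case: pickP => // i' /eqP ei _.
    by move: (coord_enum_zr i'); rewrite ei hj.
  + by [].
- move=> a [_ ha]; apply/rowP => j; rewrite !mxE; case ej: (coord_index j) => [i|].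
    by move: ej; rewrite /coord_index; case: pickP => // i' /eqP ei [<-]; rewrite mxE ei.
  by rewrite ha // coord_index_zr.
- by move=> v hv; apply/rowP => i; rewrite !mxE coord_index_enum.
- by split; apply: continuous_subspaceT; apply: select_coords_cont.
Qed.

End CoordinateSets.

Lemma sum_root_unity (F : idomainType) (g : F) (n : nat) :
  g ^+ n = 1 -> g != 1 -> \sum_(t < n) g ^+ t = 0.
Proof.
move=> gn g1; apply/eqP; have := subrX1 g n; rewrite gn subrr => /esym/eqP.
by rewrite mulf_eq0 subr_eq0 (negbTE g1).
Qed.

Section Ramification.
Variable R : realType.
Implicit Types (T : seq rat) (f : rat -> Cplx R).

Lemma ram_spec T f : (forall k, k \in T -> 0 < k) ->
  (0 < ram T f)%N /\ forall k, k \in T -> f k != 0 -> (ram T f)%:R * k \is a Num.nat.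
Proof.
move=> hT; suff /andP[r0 /allP h] : in_ram T f (ram T f).
  by split => // k kT fk; have := h k kT; rewrite fk.
rewrite /ram; case: pselect => [h|h]; first by case: (ex_minnP h).
exfalso; apply: h; exists (\prod_(k <- T) `|denq k|)%N.
rewrite /in_ram prodn_gt0 /=; last by move=> i; rewrite absz_gt0 denq_neq0.
apply/allP => k kT; apply/implyP => _; rewrite natrEint mulr_ge0 ?ler0n ?ltW ?hT //.
by rewrite -[_%:R]/((Posz _)%:~R) mulr_int_den (big_rem k kT) /= dvdn_mulr.
Qed.

Lemma trace_coef (n : nat) f y :
  \sum_(t < n) sigma_pow t f y = (\sum_(t < n) galfactor R y ^+ t) * f y.
Proof. by rewrite mulr_suml; apply: eq_bigr => t _; rewrite /sigma_pow -exprnP. Qed.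

Lemma galfactor_int_eq1 y : y \is a Num.int -> galfactor R y = 1.
Proof.
move=> yi; apply/eqP; rewrite -(expr1z (galfactor R y)) -(expr0z (galfactor R y)).
by rewrite galfactor_expz_eq subr0 mul1r.
Qed.

Lemma trace_int (n : nat) f y : y \is a Num.int ->
  \sum_(t < n) sigma_pow t f y = n%:R * f y.
Proof.
move=> yi; rewrite trace_coef galfactor_int_eq1 //.
by under eq_bigr do rewrite expr1n; rewrite sumr_const card_ord mulr_natl.
Qed.

(* at a non-integral exponent y of the support, g_y is a nontrivial
   (ram f)-th root of unity, so the trace vanishes *)
Lemma trace_nonint T f y : (forall k, k \in T -> 0 < k) ->
  (f y != 0 -> y \in T) -> ~~ (y \is a Num.int) -> \sum_(t < ram T f) sigma_pow t f y = 0.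
Proof.
move=> hT hyT yn; have [r0 hr] := ram_spec f hT.
rewrite trace_coef; case: (eqVneq (f y) 0) => [->|fy]; first by rewrite mulr0.
rewrite sum_root_unity ?mul0r //.
  apply/eqP; rewrite exprnP -(expr0z (galfactor R y)) galfactor_expz_eq subr0.
  exact: intr_nat (hr y (hyT fy) fy).
by rewrite -(expr1z (galfactor R y)) -(expr0z (galfactor R y)) galfactor_expz_eq subr0 mul1r.
Qed.

End Ramification.

Section ConfigSpace.
Variables (R : realType) (S : seq rat) (q : rat -> Cplx R).
Hypothesis hq : expfactor_on S q.
Variable ks : seq rat.
Hypothesis ks_sorted : sorted (fun x y => y < x) ks.
Hypothesis ks_levels : forall x, x \in ks <-> is_Level S q x.

Local Notation r := (ram S q).
Local Notation s := (cs S q).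
Local Notation K := (cK S q).

Lemma q_supp y : q y != 0 -> y \in S.
Proof. by case: hq => h _; apply: h. Qed.

Lemma q_supp_pos y : q y != 0 -> 0 < y.
Proof. by case: hq => h1 h2 hy; apply/h2/h1. Qed.

Lemma r_gt0 : (0 < r)%N.
Proof. by case: (ram_spec q (proj2 hq)). Qed.

Lemma r_supp_int y : q y != 0 -> r%:R * y \is a Num.int.
Proof. by move=> hy; case: (ram_spec q (proj2 hq)) => _ h; apply/intr_nat/h/hy/q_supp. Qed.

Lemma K_spec : max0_spec (fun y => (y \in S) && (q y != 0)) K.
Proof. exact: slope_in_spec. Qed.

Lemma K_ge y : q y != 0 -> y <= K.
Proof. by move=> hy; case: K_spec => _ _; apply; rewrite q_supp. Qed.

Lemma s_eq : (s%:R : rat) = r%:R * K.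
Proof.
suff : r%:R * K \is a Num.nat by rewrite natrEtruncn => /eqP.
case: K_spec => _ [->|/andP[_ hK]] _; first by rewrite mulr0 rpred0.
by rewrite natrEint r_supp_int // mulr_ge0 ?ler0n ?(ltW (q_supp_pos hK)).
Qed.

Definition gpt (j : 'I_s) : rat := (j.+1)%:R / r%:R.

Lemma gpt_r j : r%:R * gpt j = (j.+1)%:R.
Proof. by rewrite /gpt mulrC divfK // pnatr_eq0 -lt0n r_gt0. Qed.

Lemma gpt_inj : injective gpt.
Proof.
move=> i j /(congr1 (fun x => r%:R * x)); rewrite !gpt_r => /eqP.
by rewrite eqr_nat => /eqP [] /val_inj.
Qed.

Lemma gpt_pos j : 0 < gpt j.
Proof. by rewrite divr_gt0 ?ltr0n ?r_gt0. Qed.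

Lemma gpt_le j : gpt j <= K.
Proof.
have r0 : (0 < r%:R :> rat) by rewrite ltr0n r_gt0.
by rewrite -(ler_pM2l r0) gpt_r -s_eq ler_nat ltn_ord.
Qed.

Lemma on_grid x : 0 < x -> x <= K -> r%:R * x \is a Num.nat -> exists j : 'I_s, x = gpt j.
Proof.
move=> x0 xK /natrP[m hm]; have r0 : (0 < r%:R :> rat) by rewrite ltr0n r_gt0.
have m0 : (0 < m)%N by rewrite -(ltr0n rat) -hm mulr_gt0.
have ms : (m.-1 < s)%N by rewrite prednK // -(ler_nat rat) s_eq -hm ler_pM2l.
by exists (Ordinal ms); rewrite /gpt /= prednK // -hm mulrAC divff ?mul1r ?gt_eqF.
Qed.

Lemma grid_mem x : (x \in grid r s) = [exists j : 'I_s, x == gpt j].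
Proof.
apply/mapP/existsP => [[n]|[j /eqP ->]]; last by exists (nat_of_ord j); rewrite // mem_iota ltn_ord.
by rewrite mem_iota add0n /= => hn ->; exists (Ordinal hn).
Qed.

Section GridSum.
Variable a : 'rV[Cplx R]_s.

Lemma qa_val j : qa r a (gpt j) = a 0 j.
Proof.
rewrite /qa (bigD1 j) //= -/(gpt j) eqxx big1 ?addr0 // => i ij.
by case: eqP => // /gpt_inj e; rewrite e eqxx in ij.
Qed.

Lemma qa_supp y : qa r a y != 0 -> exists j : 'I_s, y = gpt j.
Proof.
move=> h; suff /existsP[j /eqP ->] : [exists j : 'I_s, y == gpt j] by exists j.
apply: contraNT h; rewrite negb_exists => /forallP hn.
by rewrite /qa big1 // => i _; have := hn i; rewrite -/(gpt i); case: eqP.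
Qed.

Lemma qa_grid y : qa r a y != 0 -> y \in grid r s.
Proof. by move=> /qa_supp[j ->]; rewrite grid_mem; apply/existsP; exists j. Qed.

Lemma qa_pos y : qa r a y != 0 -> 0 < y.
Proof. by move=> /qa_supp[j ->]; exact: gpt_pos. Qed.

End GridSum.

Lemma grid_pos k : k \in grid r s -> 0 < k.
Proof. by rewrite grid_mem => /existsP[j /eqP ->]; exact: gpt_pos. Qed.

Definition Lq (d : int) := slope_in S (fdiff (sigma_pow d q) (sigma_pow 0 q)).
Definition La (a : 'rV[Cplx R]_s) (d : int) :=
  slope_in (grid r s) (fdiff (sigma_pow d (qa r a)) (sigma_pow 0 (qa r a))).

Lemma Lq_spec d : max0_spec (nonint_supp (fun y => q y != 0) d) (Lq d).
Proof. by apply: max0_spec_ext (slope_sigma_spec d 0 q_supp) => y; rewrite subr0. Qed.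

Lemma La_spec a d : max0_spec (nonint_supp (fun y => qa r a y != 0) d) (La a d).
Proof. by apply: max0_spec_ext (slope_sigma_spec d 0 (@qa_grid a)) => y; rewrite subr0. Qed.

Lemma ks_Lq x : x \in ks <-> (x != 0 /\ exists d, x = Lq d).
Proof.
have LvE i : slope_in S (fdiff q (sigma_pow i q)) = Lq (- i).
  rewrite (slope_ext _ (g := fdiff (sigma_pow 0 q) (sigma_pow i q))) => [|y]; last first.
    by rewrite /fdiff sigma_pow0.
  by rewrite slope_sigma_shift ?sub0r //; exact: q_supp.
split => [/ks_levels [x0 [i xi]]|[x0 [d xd]]].
  by split => //; exists (- i); rewrite xi LvE.
by apply/ks_levels; split => //; exists (- d); rewrite xd LvE opprK.
Qed.

Lemma equiv_q_supp a : equiv_q S q a <->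
  ((forall y, y \in ks -> qa r a y != 0) /\ (forall y, qa r a y != 0 -> inA ks y)).
Proof.
apply: iff_trans (equiv_supp ks_sorted Lq_spec (La_spec a) ks_Lq r_gt0 r_supp_int (@qa_pos a)).
rewrite /equiv_q /=; split => h k l hk hl; have := h k l hk hl;
  by rewrite (slope_sigma_shift _ _ q_supp) (slope_sigma_shift _ _ (@qa_grid a)).
Qed.

Lemma trace_zero_coords (a : 'rV[Cplx R]_s) :
  trace_zero r a <-> (forall j : 'I_s, gpt j \is a Num.int -> a 0 j = 0).
Proof.
split => [h j hj|h y].
  have := h (gpt j); rewrite trace_int // qa_val => /eqP; rewrite mulf_eq0 pnatr_eq0.
  have [r0 _] := ram_spec (qa r a) grid_pos; rewrite (gtn_eqF r0) => /eqP //.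
case: (boolP (y \is a Num.int)) => [yi|yn]; last exact: trace_nonint grid_pos (@qa_grid a y) yn.
rewrite trace_int //; case: (eqVneq (qa r a y) 0) => [->|/qa_supp [j yj]]; first by rewrite mulr0.
by rewrite yj qa_val h ?mulr0 // -yj.
Qed.

Lemma level_props k : k \in ks ->
  [/\ q k != 0, 0 < k, k <= K, inA ks k & ~~ (k \is a Num.nat)].
Proof.
move=> kk; have [d [kd /andP[qk hd]]] := level_witness Lq_spec ks_Lq kk.
have kpos := q_supp_pos qk.
have kn : ~~ (k \is a Num.nat) by apply: contra hd => /intr_nat kn; rewrite rpredM ?rpred_int.
split => //; first exact: K_ge.
rewrite /inA kpos (negbTE kn) /=; apply/existsP.
have ts : (index k ks < size ks)%N by rewrite index_mem.
exists (Ordinal ts); rewrite /= nth_index // lexx natrEint mulr_ge0 ?ler0n ?(ltW kpos) // andbT.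
by have := rden_int (ltnSn (index k ks)) ts; rewrite nth_index.
Qed.

Lemma inA_grid x : inA ks x -> r%:R * x \is a Num.nat.
Proof.
move=> /andP[x0 /orP[xn|/existsP[i /andP[_ hi]]]]; first by rewrite rpredM ?natr_nat.
apply: mulr_nat_dvd hi; apply: (rden_div (d := r%:Z) (ltn_ord i)) => t ti.
have ts : (t < size ks)%N := leq_trans ti (ltn_ord i).
by have [qk _ _ _ _] := level_props (mem_nth 0 ts); apply: r_supp_int.
Qed.

Lemma inA_le x : inA ks x -> ~~ (x \is a Num.nat) -> x <= K.
Proof.
move=> /andP[x0 /orP[xn|/existsP[i /andP[xi _]]]] hn; first by rewrite xn in hn.
by have [_ _ h _ _] := level_props (mem_nth 0 (ltn_ord i)); exact: le_trans xi h.
Qed.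

Definition level_coord : pred 'I_s := fun j => gpt j \in ks.
Definition outA_coord : pred 'I_s := fun j => ~~ inA ks (gpt j).
Definition outAnN_coord : pred 'I_s := fun j => ~~ inA ks (gpt j) || (gpt j \is a Num.int).

Lemma Bq_coord_set : Bq S q = coord_set level_coord outA_coord.
Proof.
apply/seteqP; split => a /=.
  move=> /equiv_q_supp [ks_a a_A]; split => j hj; first by rewrite -qa_val ks_a.
  by apply/eqP; apply: contraTT hj => hj; rewrite /outA_coord negbK a_A ?qa_val.
move=> [a_nz a_zr]; apply/equiv_q_supp; split.
  move=> y yk; have [_ y0 yK yA _] := level_props yk.
  by have [j yj] := on_grid y0 yK (inA_grid yA); rewrite yj qa_val a_nz // /level_coord -yj.
move=> y /[dup] hy /qa_supp [j yj]; move: hy; rewrite yj qa_val => hj.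
by apply/negPn; apply: contra hj => h; rewrite a_zr.
Qed.

Lemma SBq_coord_set : SBq S q = coord_set level_coord outAnN_coord.
Proof.
apply/seteqP; split => a /=.
  move=> [hB /trace_zero_coords hT]; have : Bq S q a := hB.
  rewrite Bq_coord_set => -[nz zr].
  by split => // j /orP[hj|hj]; [exact: zr | exact: hT].
move=> [nz zr]; split.
  suff hB : Bq S q a by [].
  by rewrite Bq_coord_set; split => // j hj; apply: zr; apply/orP; left.
by apply/trace_zero_coords => j hj; apply: zr; rewrite /outAnN_coord hj orbT.
Qed.

Lemma level_not_outA j : level_coord j -> ~~ outA_coord j.
Proof. by move=> hj; rewrite /outA_coord negbK; have [] := level_props hj. Qed.

Lemma level_not_outAnN j : level_coord j -> ~~ outAnN_coord j.
Proof.
move=> hj; rewrite /outAnN_coord negb_or level_not_outA //=.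
by have [_ k0 _ _ kn] := level_props hj; rewrite intrEge0 // ltW.
Qed.

Lemma card_coords (P : rat -> bool) n :
  (forall x, P x -> exists j : 'I_s, x = gpt j) -> is_card P n ->
  #|[pred j : 'I_s | P (gpt j)]| = n.
Proof.
move=> hP [w [uw mw <-]]; rewrite cardE -(size_map gpt); apply: size_eq_mem => //.
  by rewrite map_inj_uniq ?enum_uniq //; exact: gpt_inj.
move=> x; rewrite mw; apply/mapP/idP => [[j]|hx]; first by rewrite mem_enum inE => hj ->.
by have [j xj] := hP x hx; exists j; rewrite // mem_enum inE -xj.
Qed.

Lemma card_level_coord : #|level_coord| = size ks.
Proof.
rewrite -(@card_coords (fun x => x \in ks) (size ks)); first exact: eq_card.
  move=> x xk; have [_ x0 xK xA _] := level_props xk; exact: on_grid x0 xK (inA_grid xA).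
by exists ks; split => //; exact: sorted_uniq_levels ks_sorted.
Qed.

Lemma card_free_B N : is_card (fun x => inInc ks x && (x <= K)) N ->
  #|free_coord level_coord outA_coord| = N.
Proof.
move=> hN; rewrite -(card_coords _ hN).
  by apply: eq_card => j; rewrite !inE /level_coord /outA_coord /inInc negbK gpt_le andbT andbC.
move=> x /andP[/andP[xA _] xK]; exact: on_grid (proj1 (andP xA)) xK (inA_grid xA).
Qed.

Lemma card_free_SB M : is_card (fun x => inInc ks x && ~~ (x \is a Num.nat)) M ->
  #|free_coord level_coord outAnN_coord| = M.
Proof.
move=> hM; rewrite -(card_coords _ hM).
  apply: eq_card => j; rewrite !inE /level_coord /outAnN_coord /inInc negb_or negbK.
  rewrite intrEge0 ?(ltW (gpt_pos j)) //.
  by case: (gpt j \in ks); case: (inA ks _); rewrite ?andbF.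
move=> x /andP[/andP[xA _] xn].
exact: on_grid (proj1 (andP xA)) (inA_le xA xn) (inA_grid xA).
Qed.

End ConfigSpace.

Unset Implicit Arguments.
Set Strict Implicit.

Theorem mainTheorem3 (R : realType) (S : seq rat) (q : rat -> Cplx R)
  (hq : expfactor_on S q)
  (ks : seq rat)
  (hks_sorted : sorted (fun x y => y < x) ks)
  (hks_levels : forall x, x \in ks <-> is_Level S q x)
  (N M : nat)
  (hN : is_card (fun x => inInc ks x && (x <= cK S q)) N)
  (hM : is_card (fun x => inInc ks x && ~~ (x \is a Num.nat)) M) :
  let m := size ks in
  [/\ homeomorphic (Bq S q) (CstarC R m N),
      homeomorphic (SBq S q) (CstarC R m M),
      is_card (fun x => inA ks x && (x <= cK S q)) (m + N),
      is_card (fun x => inA ks x && ~~ (x \is a Num.nat)) (m + M)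
    & ((m + M)%:R : rat) =
      \sum_(i < m) ((rden ks i.+1)%:R * nth 0 ks i
                    - (Num.floor ((rden ks i)%:R * nth 0 ks i))%:~R)].
Proof.
move=> m; have levels := level_props hq hks_levels.
have uks := sorted_uniq_levels hks_sorted.
have cardm := card_level_coord hq hks_sorted hks_levels.
(* A(L) /\ (0, K] and A(L) \ N are obtained by adding the levels to Inc(L) *)
have cardB : is_card (fun x => inA ks x && (x <= cK S q)) (m + N).
  apply: is_card_addks uks _ _ hN => [k /levels[_ _ -> -> _] //|x].
  by rewrite /inInc andbAC.
have cardSB : is_card (fun x => inA ks x && ~~ (x \is a Num.nat)) (m + M).
  apply: is_card_addks uks _ _ hM => [k /levels[_ _ _ -> ->] //|x].
  by rewrite /inInc andbAC.
split => //.
- rewrite (Bq_coord_set hq hks_sorted hks_levels) -[m]cardm -(card_free_B hq hks_levels hN).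
  exact/coord_set_homeo/(level_not_outA hq hks_levels).
- rewrite (SBq_coord_set hq hks_sorted hks_levels) -[m]cardm -(card_free_SB hq hks_levels hM).
  exact/coord_set_homeo/(level_not_outAnN hq hks_levels).
- have ks_pos k : k \in ks -> 0 < k by move=> /levels[].
  by rewrite -(is_card_uniq (card_A_nonnat hks_sorted ks_pos) cardSB) card_layers_formula.
Qed.
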